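(* Let $(R,\mathfrak{m})$ be a commutative Noetherian local ring of prime characteristic $p$, and suppose there is a left $R[x,f]$-module $E$ which, as an $R$-module, is isomorphic to $E_R(R/\mathfrak{m})$. Let $\widetilde{E}=\bigoplus_{n\in\mathbb{N}_0}E_n$ with each $E_n=E$, the graded left $R[x,f]$-module in which $x$ maps $e\in E_n$ to $xe\in E_{n+1}$. Let $M$ be a non-zero $R$-module of finite length whose zero submodule is irreducible (i.e. is not the intersection of two non-zero submodules). Then there exists a homogeneous $R[x,f]$-homomorphism $\lambda=\bigoplus_{i\in\mathbb{N}_0}\lambda_i:R[x,f]\otimes_RM=\bigoplus_{i\in\mathbb{N}_0}(Rx^i\otimes_RM)\to\widetilde{E}$ such that $\lambda_0$ is a monomorphism.
   Context: $R[x,f]$ denotes the Frobenius skew polynomial ring over $R$: as a left $R$-module it is free on $(x^i)_{i\in\mathbb{N}_0}$, with multiplication subject to $xr = r^px$; it is graded with $n$th component $Rx^n$, viewed as an $(R,R)$-bimodule (so $rx^i\cdot s=rs^{p^i}x^i$), and $R[x,f]\otimes_RM=\bigoplus_i(Rx^i\otimes_RM)$ is a graded left $R[x,f]$-module. $\lambda_i$ denotes the restriction of $\lambda$ to the degree-$i$ component. *)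

From HB Require Import structures.
From mathcomp Require Import all_boot all_order all_algebra.
Set Implicit Arguments. Unset Strict Implicit. Unset Printing Implicit Defensive.
Import Order.TTheory GRing.Theory.
Local Open Scope ring_scope.

Section Defs.
Variable R : comUnitRingType.

Definition is_ideal (I : R -> Prop) : Prop :=
  [/\ I 0, (forall a b, I a -> I b -> I (a + b)) & (forall r a, I a -> I (r * a))].

Definition fin_gen_ideal (I : R -> Prop) : Prop :=
  exists s : seq R, forall a, I a <->
    exists c : seq R, size c = size s /\ a = \sum_(k < size s) c`_k * s`_k.

Definition noetherian : Prop := forall I, is_ideal I -> fin_gen_ideal I.

Definition maximal_ideal (I : R -> Prop) : Prop :=
  [/\ is_ideal I, ~ I 1 &
     forall J, is_ideal J -> (forall a, I a -> J a) -> ~ J 1 -> forall a, J a -> I a].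

Definition local_ring (m : R -> Prop) : Prop :=
  maximal_ideal m /\ forall J, maximal_ideal J -> forall a, J a <-> m a.

Variable V : lmodType R.

Definition submod (N : V -> Prop) : Prop :=
  [/\ N 0, (forall a b, N a -> N b -> N (a + b)) & (forall r a, N a -> N (r *: a))].

Definition nonzero_sub (N : V -> Prop) : Prop := exists v, N v /\ v <> 0.

Definition ssubmod (N L : V -> Prop) : Prop :=
  (forall v, N v -> L v) /\ exists v, L v /\ ~ N v.

Definition finite_length : Prop :=
  exists (n : nat) (N : nat -> V -> Prop),
    [/\ forall k, submod (N k),
        (forall v, N 0%N v <-> v = 0),
        (forall v, N n v),
        (forall k, (k < n)%N -> ssubmod (N k) (N k.+1)) &
        (forall k, (k < n)%N -> forall L, submod L ->
             ~ (ssubmod (N k) L /\ ssubmod L (N k.+1)))].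

Definition zero_irreducible : Prop :=
  ~ exists N1 N2 : V -> Prop,
      [/\ submod N1, submod N2, nonzero_sub N1, nonzero_sub N2 &
          forall v, (N1 v /\ N2 v) <-> v = 0].

Definition injective_module : Prop :=
  forall (A B : lmodType R) (i : {linear A -> B}) (g : {linear A -> V}),
    injective i -> exists h : {linear B -> V}, forall a, h (i a) = g a.

(** V is (isomorphic to) an injective hull E_R(R/m) of R/m: V is injective
    and is an essential extension of a submodule R e isomorphic to R/m
    (i.e. with annihilator of e equal to m). *)
Definition is_injective_hull_residue (m : R -> Prop) : Prop :=
  injective_module /\
  exists e : V, (forall r, r *: e = 0 <-> m r) /\
    forall N, submod N -> nonzero_sub N ->
      exists w, [/\ N w, w <> 0 & exists s, w = s *: e].

(** A left R[x,f]-module structure on the R-module V: the action of x,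
    an additive map phi with x r = r^p x, i.e. phi (r v) = r^p phi v. *)
Definition frobenius_action (p : nat) (phi : V -> V) : Prop :=
  (forall a b, phi (a + b) = phi a + phi b) /\
  (forall r v, phi (r *: v) = r ^+ p *: phi v).

(** Formal sums of pure tensors  r x^i (x) m  and the congruence whose
    quotient is R x^i (x)_R V (R x^i with right structure
    r x^i . s = r s^(p^i) x^i). *)
Inductive tens_eq (p i : nat) : seq (R * V) -> seq (R * V) -> Prop :=
| te_refl s : tens_eq p i s s
| te_sym s t : tens_eq p i s t -> tens_eq p i t s
| te_trans s t u : tens_eq p i s t -> tens_eq p i t u -> tens_eq p i s u
| te_cat s1 t1 s2 t2 : tens_eq p i s1 t1 -> tens_eq p i s2 t2 ->
    tens_eq p i (s1 ++ s2) (t1 ++ t2)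
| te_comm s t : tens_eq p i (s ++ t) (t ++ s)
| te_zero v : tens_eq p i [:: (0, v)] [::]
| te_addl r1 r2 v : tens_eq p i [:: (r1 + r2, v)] [:: (r1, v); (r2, v)]
| te_addr r v1 v2 : tens_eq p i [:: (r, v1 + v2)] [:: (r, v1); (r, v2)]
| te_bal r s v : tens_eq p i [:: (r * s ^+ (p ^ i), v)] [:: (r, s *: v)].

End Defs.

(** A homogeneous R[x,f]-homomorphism
      lambda = (+)_i lambda_i : (+)_i (R x^i (x)_R M) -> (+)_i E,
    each lambda_i given as a map on formal sums that respects [tens_eq],
    is additive, left R-linear, and commutes with x
    (x . (r x^i (x) m) = r^p x^(i+1) (x) m, and x acts E_i -> E_(i+1) by phi). *)
Definition homog_Rxf_hom (R : comUnitRingType) (M E : lmodType R) (p : nat)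
    (phi : E -> E) (lam : nat -> seq (R * M) -> E) : Prop :=
  [/\ forall i s t, tens_eq p i s t -> lam i s = lam i t,
      forall i, lam i [::] = 0,
      forall i s t, lam i (s ++ t) = lam i s + lam i t,
      forall i (r : R) s, lam i [seq (r * q.1, q.2) | q <- s] = r *: lam i s &
      forall i s, lam i.+1 [seq (q.1 ^+ p, q.2) | q <- s] = phi (lam i s)].

Definition lam0_mono (R : comUnitRingType) (M E : lmodType R) (p : nat)
    (lam : nat -> seq (R * M) -> E) : Prop :=
  forall s, lam 0%N s = 0 -> tens_eq p 0 s [::].

(** The bottom step of a composition series of M contains a simple cyclic
    submodule R w, and since (0) is irreducible in M every non-zero submodule
    of M meets R w.  As R w is simple, the
    annihilator of w is a maximal ideal, hence m, so r w |-> r e embeds R w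
    into E; by injectivity of E this extends to h : M -> E, and h is injective
    because its kernel meets R w trivially.  Then
    lambda_i (r x^i (x) v) := r phi^i (h v) is a homogeneous R[x,f]-map, and
    lambda_0 = h up to the identification R (x)_R M = M. *)

Set Warnings "-notation-overridden,-ambiguous-paths".
From HB Require Import structures.
From mathcomp Require Import all_boot all_order all_algebra.
From mathcomp Require Import boolp.

Set Implicit Arguments.
Unset Strict Implicit.
Unset Printing Implicit Defensive.

Import GRing.Theory.
Local Open Scope ring_scope.

Section CyclicSubmodule.
Variables (R : comUnitRingType) (M : lmodType R) (w : M).

Definition in_cyclic (x : M) : bool := `[< exists r : R, x = r *: w >].

Lemma in_cyclicP x : reflect (exists r : R, x = r *: w) (in_cyclic x).
Proof. exact: asboolP. Qed.

Lemma submod_cyclic : submod (fun x : M => exists r : R, x = r *: w).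
Proof.
split.
- by exists 0; rewrite scale0r.
- by move=> _ _ [a ->] [b ->]; exists (a + b); rewrite scalerDl.
- by move=> r _ [a ->]; exists (r * a); rewrite scalerA.
Qed.

Lemma cyclic_closed : subsemimod_closed in_cyclic.
Proof.
have [C0 CD CZ] := submod_cyclic.
split; [split|].
- exact/in_cyclicP.
- by move=> x y /in_cyclicP Cx /in_cyclicP Cy; apply/in_cyclicP/CD.
- by move=> a x /in_cyclicP Cx; apply/in_cyclicP/CZ.
Qed.

Definition cyclic_sub := {x : M | in_cyclic x}.
HB.instance Definition _ := [isSub of cyclic_sub for sval].
HB.instance Definition _ := [Choice of cyclic_sub by <:].
HB.instance Definition _ :=
  GRing.SubChoice_isSubLmodule.Build R M in_cyclic cyclic_sub cyclic_closed.

Definition cyclic_val (x : cyclic_sub) : M := val x.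

Lemma cyclic_val_linear : linear cyclic_val.
Proof. by []. Qed.

HB.instance Definition _ :=
  GRing.isLinear.Build R cyclic_sub M *:%R cyclic_val cyclic_val_linear.

Lemma cyclic_coef_ex (x : cyclic_sub) : exists r : R, val x == r *: w.
Proof. by case/in_cyclicP: (valP x) => r ->; exists r. Qed.

Definition cyclic_coef (x : cyclic_sub) : R := xchoose (cyclic_coef_ex x).

Lemma cyclic_coefP x : val x = cyclic_coef x *: w.
Proof. exact/eqP/(xchooseP (cyclic_coef_ex x)). Qed.

Variables (E : lmodType R) (e : E).
Hypothesis ann_sub : forall r : R, r *: w = 0 -> r *: e = 0.

Lemma scale_ann_sub (r s : R) : r *: w = s *: w -> r *: e = s *: e.
Proof.
move=> rws; apply/eqP; rewrite -subr_eq0 -scalerBl; apply/eqP/ann_sub.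
by rewrite scalerBl rws subrr.
Qed.

Lemma cyclic_extend :
  injective_module E -> exists h : {linear M -> E}, forall r, h (r *: w) = r *: e.
Proof.
move=> Einj.
pose g (x : cyclic_sub) : E := cyclic_coef x *: e.
have g_linear : linear g.
  move=> a x y; rewrite /g scalerA -scalerDl; apply: scale_ann_sub.
  by rewrite scalerDl -scalerA -!cyclic_coefP; apply: cyclic_val_linear.
pose gl : {linear cyclic_sub -> E} := HB.pack g (GRing.isLinear.Build _ _ _ _ g g_linear).
have [h hg] := Einj _ _ cyclic_val gl val_inj.
exists h => r; have Cr : in_cyclic (r *: w) by apply/in_cyclicP; exists r.
have := hg (Sub (r *: w) Cr); rewrite /cyclic_val /= => ->.
by apply: scale_ann_sub; rewrite -cyclic_coefP.
Qed.

End CyclicSubmodule.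

Section SimpleCyclic.
Variables (R : comUnitRingType) (M : lmodType R).

Lemma finite_length_simple_cyclic :
  finite_length M -> (exists v : M, v <> 0) ->
  exists2 w : M, w <> 0 & forall a : R, a *: w <> 0 -> exists b, b *: (a *: w) = w.
Proof.
move=> [n [N [Nsub N0 Nn Nss Nsimple]]] [v v0].
have n_gt0 : (0 < n)%N.
  by case: n Nn Nss Nsimple => // Nn _ _; case: v0; apply/N0/Nn.
have [_ [w [N1w N0w]]] := Nss 0%N n_gt0.
have w0 : w <> 0 by move/N0.
exists w => // a aw0; apply: contrapT => no_b.
apply: (Nsimple 0%N n_gt0 _ (submod_cyclic (a *: w))).
have [_ _ N1Z] := Nsub 1%N.
split; split.
- by move=> x /N0 ->; exists 0; rewrite scale0r.
- by exists (a *: w); split; [exists 1; rewrite scale1r | move/N0].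
- by move=> _ [b ->]; apply/N1Z/N1Z.
- by exists w; split => // -[b wb]; apply: no_b; exists b.
Qed.

Lemma ideal_ann (w : M) : is_ideal (fun r : R => r *: w = 0).
Proof.
split.
- by rewrite scale0r.
- by move=> a b aw bw; rewrite scalerDl aw bw addr0.
- by move=> r a aw; rewrite -scalerA aw scaler0.
Qed.

Lemma simple_cyclic_ann_maximal (w : M) :
  w <> 0 -> (forall a : R, a *: w <> 0 -> exists b, b *: (a *: w) = w) ->
  maximal_ideal (fun r : R => r *: w = 0).
Proof.
move=> w0 simple_w; split; [exact: ideal_ann | by rewrite scale1r |].
move=> J [_ JD JM] annJ J1 a Ja; apply: contrapT => aw0.
have [b baw] := simple_w a aw0; apply: J1.
have J1ba : J (1 - b * a) by apply: annJ; rewrite scalerBl scale1r -scalerA baw subrr.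
by have := JD _ _ J1ba (JM b a Ja); rewrite subrK.
Qed.

Lemma zero_irreducible_injective (E : lmodType R) (h : {linear M -> E}) (w : M) :
  zero_irreducible M -> w <> 0 -> (forall r : R, h (r *: w) = 0 -> r *: w = 0) ->
  injective h.
Proof.
move=> irr w0 ker_w x y hxy; apply/eqP; rewrite -subr_eq0; apply/eqP.
have hz : h (x - y) = 0 by rewrite linearB hxy subrr.
move: (x - y) hz => z hz; apply: contrapT => z0; apply: irr.
exists (fun v => h v = 0), (fun v => exists r, v = r *: w); split.
- split; [exact: raddf0 | by move=> a b ha hb; rewrite linearD ha hb addr0 |].
  by move=> r a ha; rewrite linearZ_LR ha scaler0.
- exact: submod_cyclic.
- by exists z.
- by exists w; split => //; exists 1; rewrite scale1r.
- move=> v; split; first by move=> [hv [r vr]]; rewrite vr; apply: ker_w; rewrite -vr.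
  by move=> ->; split; [exact: raddf0 | exists 0; rewrite scale0r].
Qed.

End SimpleCyclic.

Lemma embed_into_injective_hull (R : comUnitRingType) (m : R -> Prop) (E M : lmodType R) :
  local_ring m -> is_injective_hull_residue E m ->
  (exists v : M, v <> 0) -> finite_length M -> zero_irreducible M ->
  exists h : {linear M -> E}, injective h.
Proof.
move=> [_ max_is_m] [Einj [e [ann_e _]]] M_neq0 Mfl irr.
have [w w0 simple_w] := finite_length_simple_cyclic Mfl M_neq0.
have ann_w r : r *: w = 0 <-> r *: e = 0.
  by rewrite ann_e; apply: (max_is_m _ (simple_cyclic_ann_maximal w0 simple_w)).
have [h hw] := cyclic_extend (fun r => (ann_w r).1) Einj.
exists h; apply: (zero_irreducible_injective irr w0) => r.
by rewrite hw => /ann_w.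
Qed.

Section TensorDegreeZero.
Variables (R : comUnitRingType) (V : lmodType R) (p : nat).

Lemma tens_eq0_bal (r s : R) (v : V) : tens_eq p 0 [:: (r * s, v)] [:: (r, s *: v)].
Proof. by have := te_bal p 0 r s v; rewrite expn0 expr1. Qed.

Lemma tens_eq0_one0 : tens_eq p 0 [:: ((1 : R), (0 : V))] [::].
Proof.
have := te_sym (tens_eq0_bal 1 0 (0 : V)); rewrite mulr0 scale0r => one_zero.
exact: te_trans one_zero (te_zero p 0 0).
Qed.

Lemma tens_eq0_collect (s : seq (R * V)) :
  tens_eq p 0 s [:: (1, \sum_(q <- s) q.1 *: q.2)].
Proof.
elim: s => [|[a v] s IH]; first by rewrite big_nil; apply/te_sym/tens_eq0_one0.
rewrite big_cons /=; apply: (te_trans _ (te_sym (te_addr p 0 1 _ _))).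
apply: (te_cat (s1 := [:: (a, v)]) (t1 := [:: (1, a *: v)]) (s2 := s)) => //.
by have := tens_eq0_bal 1 a v; rewrite mul1r.
Qed.

End TensorDegreeZero.

Section FrobeniusLambda.
Variables (R : comUnitRingType) (M E : lmodType R) (p : nat) (phi : E -> E).
Hypothesis phi_frob : frobenius_action p phi.

Lemma frobenius_action_iter i : frobenius_action (p ^ i) (iter i phi).
Proof.
have [phiD phiZ] := phi_frob.
elim: i => [|i [IHD IHZ]]; first by split=> // r v; rewrite expr1.
split=> [a b | r v] /=; first by rewrite IHD phiD.
by rewrite IHZ phiZ -exprM expnS mulnC.
Qed.

Lemma frobenius_action0 : phi 0 = 0.
Proof. by apply: (@addrI _ (phi 0)); rewrite -phi_frob.1 !addr0. Qed.

Variable h : {linear M -> E}.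

Definition frob_lambda (i : nat) (s : seq (R * M)) : E :=
  \sum_(q <- s) q.1 *: iter i phi (h q.2).

Lemma frob_lambda_tens_eq i s t : tens_eq p i s t -> frob_lambda i s = frob_lambda i t.
Proof.
have [iterD iterZ] := frobenius_action_iter i.
rewrite /frob_lambda; elim=> {s t} //.
- by move=> s t u _ -> _ ->.
- by move=> s1 t1 s2 t2 _ e1 _ e2; rewrite !big_cat e1 e2.
- by move=> s t; rewrite !big_cat; apply: addrC.
- by move=> v; rewrite big_seq1 big_nil scale0r.
- by move=> r1 r2 v; rewrite !big_cons !big_nil /= scalerDl !addr0.
- by move=> r v1 v2; rewrite !big_cons !big_nil /= linearD iterD scalerDr !addr0.
- by move=> r s v; rewrite !big_seq1 linearZ iterZ scalerA.
Qed.

Lemma frob_lambda_homog : homog_Rxf_hom p phi frob_lambda.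
Proof.
rewrite /frob_lambda; split.
- exact: frob_lambda_tens_eq.
- by move=> i; rewrite big_nil.
- by move=> i s t; rewrite big_cat.
- by move=> i r s; rewrite big_map scaler_sumr; apply: eq_bigr => q _; rewrite scalerA.
- move=> i s; rewrite big_map (big_morph phi phi_frob.1 frobenius_action0).
  by apply: eq_bigr => q _; rewrite phi_frob.2.
Qed.

Lemma frob_lambda0_mono : injective h -> lam0_mono p frob_lambda.
Proof.
move=> h_inj s lam0s; apply: (te_trans (tens_eq0_collect p s)).
suff -> : \sum_(q <- s) q.1 *: q.2 = 0 by apply: tens_eq0_one0.
apply: h_inj; rewrite raddf0 -lam0s raddf_sum; apply: eq_bigr => q _.
exact: linearZ_LR.
Qed.

End FrobeniusLambda.

Theorem lemma3p1 (R : comUnitRingType) (m : R -> Prop) (p : nat)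
  (E : lmodType R) (phi : E -> E) (M : lmodType R) :
  noetherian R -> local_ring m -> p \in [pchar R] ->
  @frobenius_action R E p phi ->
  is_injective_hull_residue E m ->
  (exists v : M, v <> 0) -> finite_length M -> zero_irreducible M ->
  exists lam : nat -> seq (R * M) -> E,
    homog_Rxf_hom p phi lam /\ lam0_mono p lam.
Proof.
move=> _ loc _ phi_frob hull M_neq0 Mfl irr.
have [h h_inj] := embed_into_injective_hull loc hull M_neq0 Mfl irr.
exists (frob_lambda phi h); split.
- exact: frob_lambda_homog.
- exact: frob_lambda0_mono.
Qed.
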